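(* Let $F$ be a field, $U,V$ finite-dimensional $F$-vector spaces of dimensions $n$ and $m$, and $A:U\times U\to V$ an alternating bilinear map whose image spans $V$. If $m>2$ and $n>m+1$, then there exists a basis $\{u_1,\dots,u_n\}$ of $U$, ordered $u_1<\dots<u_n$, such that the associated set $\mathcal{B}$ (constructed as in the context) is either not a tree of height one, or else satisfies all of the following: (1) $\mathcal{B}=\{\{1,2\},\{1,3\},\dots,\{1,m+1\}\}$; (2) $A(u_1,u_i)=0$ for all $i$ with $m+2\le i\le n$; (3) $A(u_i,u_j)=0$ for all $i,j$ with $m+1<i<j\le n$; (4) $A(u_i,u_j)\in\operatorname{span}\{A(u_1,u_i)\}$ for all $i,j$ with $2\le i\le m+1<j\le n$.
   Context: Given a basis $u_1<\dots<u_n$ of $U$: $\mathcal{Y}$ is the set of $2$-element subsets of $\{1,\dots,n\}$, totally ordered by $\{i,j\}<\{r,s\}$ iff $\max\{i,j\}<\max\{r,s\}$, or the maxima are equal to $a$ and the remaining element of $\{i,j\}\setminus\{a\}$ is smaller than that of $\{r,s\}\setminus\{a\}$. Starting from $\mathcal{B}_0=\emptyset,B_0=\emptyset$, inductively let $\{i,j\}$ ($i<j$) be the least element of $\mathcal{Y}$ with $A(u_i,u_j)\notin\operatorname{span}(B_k)$ and set $\mathcal{B}_{k+1}=\mathcal{B}_k\cup\{\{i,j\}\}$, $B_{k+1}=B_k\cup\{A(u_i,u_j)\}$; stop at $k=m$ and put $\mathcal{B}=\mathcal{B}_m$. The set $\mathcal{B}$ is a tree of height one if there is an $i\in\{1,\dots,n\}$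 with $i\in\{j,l\}$ for every $\{j,l\}\in\mathcal{B}$. *)

From HB Require Import structures.
From mathcomp Require Import all_boot all_order all_algebra.
Set Implicit Arguments. Unset Strict Implicit. Unset Printing Implicit Defensive.
Import GRing.Theory.
Local Open Scope ring_scope.

(* Indices are 0-based: the paper's u_k is b`_(k-1), the paper's pair {i,j}
   (i<j) is the nat pair (i-1, j-1). *)

(* The set Y of 2-element subsets of {0,..,n-1}, as pairs (i,j) with i<j,
   listed in the paper's total order: by max j, then by the other element i. *)
Definition Ypairs (n : nat) : seq (nat * nat) :=
  [seq (i, j) | j <- iota 0 n, i <- iota 0 j].

Section Greedy.
Variables (F : fieldType) (U V : vectType F) (A : U -> U -> V).
Variables (n : nat) (b : n.-tuple U).

Definition Aval (p : nat * nat) : V := A b`_p.1 b`_p.2.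

Definition greedy_step (Bk : seq (nat * nat)) : seq (nat * nat) :=
  let P := fun p => Aval p \notin <<map Aval Bk>>%VS in
  rcons Bk (nth (0%N, 0%N) (Ypairs n) (find P (Ypairs n))).

Definition greedyB (m : nat) : seq (nat * nat) := iter m greedy_step [::].
End Greedy.

Definition tree_height_one (n : nat) (B : seq (nat * nat)) : Prop :=
  exists i, (i < n)%N /\ forall p, p \in B -> i = p.1 \/ i = p.2.

(* Either some triangle x, y, z has A(x,y), A(x,z), A(y,z) linearly independent,
   or all triangles are dependent.  In the first case x, y, z are independent,
   and on a basis starting with them the greedy procedure picks {1,2}, {1,3} and
   {2,3} first, which is not a tree of height one.  In the second case, if
   A(x,-) takes two independent values then every A(p,q) lies in its image;
   since the values of A span V, some A(u,-) maps U onto V.  Putting u first,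
   then preimages of a basis of V, then the rest of ker A(u,-), the greedy
   procedure picks the star {1,2},...,{1,m+1}, and dependent triangles through u
   (with dim V > 2) give the vanishing and collinearity properties. *)

From HB Require Import structures.
From mathcomp Require Import all_boot all_order all_algebra.
From mathcomp Require Import zify.
From Stdlib Require Import Classical.
Import GRing.Theory.
Local Open Scope ring_scope.

Set Implicit Arguments. Unset Strict Implicit. Unset Printing Implicit Defensive.

Section FreeFamilies.
Variables (K : fieldType) (vT : vectType K).
Implicit Types (a b c u v : vT) (s : seq vT).

Lemma free2 u v : free [:: u; v] = (u != 0) && (v \notin <[u]>%VS).
Proof.
rewrite (perm_free (permEl (perm_catC [:: u] [:: v]))).
by rewrite free_cons span_seq1 seq1_free andbC.
Qed.

Lemma span2 a b : <<[:: a; b]>>%VS = (<[a]> + <[b]>)%VS.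
Proof. by rewrite span_cons span_seq1. Qed.

Lemma free3_notin a b c : free [:: a; b; c] ->
  [/\ a \notin <<[:: b; c]>>%VS, b \notin <<[:: a; c]>>%VS
    & c \notin <<[:: a; b]>>%VS].
Proof.
move=> fr; split.
- by move: fr; rewrite free_cons => /andP[].
- move: fr; rewrite (perm_free (permEl (perm_catCA [:: a] [:: b] [:: c]))).
  by rewrite free_cons => /andP[].
- move: fr; rewrite (perm_free (permEl (perm_catC [:: a; b] [:: c]))).
  by rewrite free_cons => /andP[].
Qed.

Lemma free3_pairs a b c : free [:: a; b; c] ->
  [/\ free [:: a; b], free [:: a; c] & free [:: b; c]].
Proof.
move=> fr; split.
- exact: (@catl_free _ _ [:: c] [:: a; b]).
- move: fr; rewrite (perm_free (permEl (perm_catCA [:: a] [:: b] [:: c]))).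
  by rewrite [free (b :: _)]free_cons => /andP[].
- by move: fr; rewrite [free (a :: _)]free_cons => /andP[].
Qed.

Lemma span2_cap_line a b c v : free [:: a; b; c] ->
  v \in <<[:: a; b]>>%VS -> v \in <<[:: a; c]>>%VS -> v \in <[a]>%VS.
Proof.
case/free3_notin=> _ nb _.
rewrite !span2 => /memv_addP[x xa [y /vlineP[k ->] ->]].
case/memv_addP=> x' x'a [z zc eq].
have [->|k0] := eqVneq k 0; first by rewrite scale0r addr0.
case/negP: nb; rewrite span2.
have -> : b = k^-1 *: (x' + z - x) by rewrite -eq addrC addKr scalerA mulVf // scale1r.
by rewrite memvZ // memvB ?memv_add // (subvP (addvSl _ _)).
Qed.

Lemma free_nth_notin_take s k : free s -> (k < size s)%N ->
  s`_k \notin <<take k s>>%VS.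
Proof.
move=> fs ks.
have : free (take k.+1 s) by apply: (@catl_free _ _ (drop k.+1 s)); rewrite cat_take_drop.
by rewrite (take_nth 0 ks) (perm_free (permEl (perm_rcons _ _))) free_cons => /andP[].
Qed.

Lemma free_nth2 s i j : free s -> (i < j)%N -> (j < size s)%N ->
  free [:: s`_i; s`_j].
Proof.
move=> fs ij js; rewrite free2 (free_not0 fs) ?mem_nth ?(ltn_trans ij) //=.
apply: contra (free_nth_notin_take fs js) => /vlineP[k ->].
by rewrite memvZ // memv_span // -(nth_take 0 ij) mem_nth // size_take js.
Qed.

Lemma free_cat_basis_compl s : free s -> basis_of fullv (s ++ vbasis (<<s>>^C)%VS).
Proof.
move=> fs; rewrite basisEdim span_cat (span_basis (vbasisP _)) addv_complf subvv.
rewrite size_cat size_tuple dimv_compl (eqP fs) subnKC ?leqnn //.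
by rewrite -(eqP fs) dimvS ?subvf.
Qed.

Lemma vpick_full_neq0 : (0 < \dim {:vT})%N -> vpick {:vT} != 0.
Proof. by rewrite vpick0 -dimv_eq0 -lt0n. Qed.

Lemma free3_ext a : (2 < \dim {:vT})%N -> a != 0 -> exists b c, free [:: a; b; c].
Proof.
move=> dim3 a0; have fa : free [:: a] by rewrite seq1_free.
have := free_cat_basis_compl fa; move: (vbasis _) => t.
have := size_basis (X := in_tuple ([:: a] ++ t)); rewrite /= => szE /[dup] /szE.
case: (tval t) => [|b [|c t']] /= sz; try by rewrite sz in dim3.
by move/basis_free => fr; exists b, c; apply: (@catl_free _ _ t' [:: a; b; c]).
Qed.

Lemma free2_notin_line a b c : free [:: a; b] -> a \in <[c]>%VS -> b \notin <[c]>%VS.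
Proof.
rewrite free2 => /andP[a0 nb] /vlineP[k ak]; apply: contra nb => /vlineP[l ->].
have k0 : k != 0 by apply: contraNneq a0 => k0; rewrite ak k0 scale0r.
by apply/vlineP; exists (l / k); rewrite ak scalerA divfK.
Qed.

Lemma free3_span_cap0 a b c v : free [:: a; b; c] -> v \in <<[:: a; b]>>%VS ->
  v \in <<[:: a; c]>>%VS -> v \in <<[:: b; c]>>%VS -> v = 0.
Proof.
move=> fr vab vac vbc; have /vlineP[k vE] := span2_cap_line fr vab vac.
have [k0|k0] := eqVneq k 0; first by rewrite vE k0 scale0r.
case/free3_notin: fr => /negP[]; rewrite -[a](scalerK k0) -vE.
exact: memvZ.
Qed.

End FreeFamilies.

Lemma basis_adapted_to_surjection (K : fieldType) (U V : vectType K)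
    (f : 'Hom(U, V)) (u : U) (e : seq V) (n : nat) :
  \dim {:U} = n -> limg f = fullv -> u \in lker f -> u != 0 -> basis_of fullv e ->
  exists b : n.-tuple U, [/\ basis_of fullv b, b`_0 = u,
    forall j, (0 < j <= size e)%N -> f b`_j = e`_j.-1
    & forall j, (size e < j)%N -> f b`_j = 0].
Proof.
move=> dimU fullf uK u0 be.
pose qs := vbasis (lker f :\: <[u]>)%VS.
pose s := u :: map f^-1%VF e ++ qs.
have fK v : f (f^-1%VF v) = v by rewrite limg_lfunVK // fullf memvf.
have span_s : (fullv <= <<s>>)%VS.
  apply/subvP => v _; rewrite span_cons span_cat addvA [(<[u]> + _)%VS]addvC -addvA.
  rewrite -[v](subrK (f^-1%VF (f v))) addrC; apply: memv_add.
    by rewrite -limg_span (span_basis be) memv_img ?memvf.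
  rewrite (span_basis (vbasisP _)) addvC addv_diff (addv_idPl _) -?memvE //.
  by rewrite memv_ker linearB /= fK subrr.
have dim_s : size s = n.
  have := dimv_cap_compl (lker f) <[u]>; rewrite (capv_idPr _) -?memvE //.
  rewrite dim_vline u0 -dimU -(limg_ker_dim f fullv) capfv fullf.
  rewrite -(span_basis be) (eqP (basis_free be)) /s /= size_cat size_map size_tuple.
  lia.
have /eqP sz_s := dim_s.
exists (Tuple sz_s); split => //.
- by rewrite basisEdim span_s size_tuple dimU leqnn.
- case=> // j /= je.
  by rewrite nth_cat size_map je (nth_map 0) ?fK.
- case=> // j /= je.
  rewrite nth_cat size_map ltnNge -ltnS je /=.
  have [jq | /(nth_default 0) ->] := ltnP (j - size e) (size qs); last exact: linear0.
  have : qs`_(j - size e) \in lker f.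
    by apply: (subvP (diffvSl _ <[u]>%VS)); apply/vbasis_mem/mem_nth.
  by rewrite memv_ker => /eqP.
Qed.

Lemma Ypairs_split k n : (k.+1 < n)%N ->
  exists rest, Ypairs n = Ypairs k.+1 ++ (0%N, k.+1) :: rest.
Proof.
move=> kn; have -> : n = (k.+1 + (n - k.+2).+1)%N by rewrite -addSnnS subnKC.
by rewrite /Ypairs iotaD map_cat flatten_cat add0n; eexists.
Qed.

Lemma mem_Ypairs p n : p \in Ypairs n -> (p.1 < p.2 < n)%N.
Proof.
case/flatten_mapP=> j; rewrite mem_iota add0n => /andP[_ jn] /mapP[i].
by rewrite mem_iota add0n => /andP[_ ij] ->; rewrite ij jn.
Qed.

Section Greedy.
Variables (F : fieldType) (U V : vectType F) (A : U -> U -> V).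
Variables (n : nat) (b : n.-tuple U).

Lemma greedy_step_first Bk s1 p s2 : Ypairs n = s1 ++ p :: s2 ->
  all (fun q => Aval A b q \in <<map (Aval A b) Bk>>%VS) s1 ->
  Aval A b p \notin <<map (Aval A b) Bk>>%VS -> greedy_step A b Bk = rcons Bk p.
Proof.
move=> Yn s1B pB; rewrite /greedy_step Yn find_cat.
have /negbTE-> : ~~ has (fun q => Aval A b q \notin <<map (Aval A b) Bk>>%VS) s1.
  by apply/hasPn => q /(allP s1B); rewrite negbK.
by rewrite /= pB addn0 nth_cat ltnn subnn.
Qed.

Lemma mem_iter_greedy k Bk p : p \in Bk -> p \in iter k (greedy_step A b) Bk.
Proof. by move=> pB; elim: k => //= k IH; rewrite mem_rcons inE IH orbT. Qed.

Lemma greedy_triangle : (3 < n)%N ->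
  free [:: A b`_0 b`_1; A b`_0 b`_2; A b`_1 b`_2] ->
  iter 3 (greedy_step A b) [::] = [:: (0, 1); (0, 2); (1, 2)]%N.
Proof.
move=> n3 fr; have [rest Yn] := Ypairs_split n3.
have [f0 _ _] := free3_pairs fr; have [_ _ n12] := free3_notin fr.
move: f0; rewrite free2 => /andP[nz01 n02].
rewrite /= (@greedy_step_first [::] [::] (0, 1) [:: (0, 2), (1, 2), (0, 3) & rest])%N //;
  last by rewrite /Aval /= span_nil memv0.
rewrite (@greedy_step_first [:: (0, 1)] [:: (0, 1)] (0, 2) [:: (1, 2), (0, 3) & rest])%N //.
- rewrite (@greedy_step_first _ [:: (0, 1); (0, 2)] (1, 2) ((0, 3) :: rest))%N //.
  by rewrite /Aval /= !andbT !memv_span ?inE ?eqxx ?orbT.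
- by rewrite /Aval /= andbT span_seq1 memv_line.
- by rewrite /Aval /= span_seq1.
Qed.

End Greedy.

Lemma triangle_not_tree_height_one n (B : seq (nat * nat)) :
  (0, 1)%N \in B -> (0, 2)%N \in B -> (1, 2)%N \in B -> ~ tree_height_one n B.
Proof.
by move=> B01 B02 B12 [i [_ hi]]; move: (hi _ B01) (hi _ B02) (hi _ B12) => /=; lia.
Qed.

Section Alternating.
Variables (F : fieldType) (U V : vectType F) (A : U -> U -> V).
Hypothesis linAl : forall (a : F) (x y z : U), A (a *: x + y) z = a *: A x z + A y z.
Hypothesis linAr : forall (a : F) (x y z : U), A z (a *: x + y) = a *: A z x + A z y.
Hypothesis altA : forall x : U, A x x = 0.

Definition Ar (x : U) : {linear U -> V} :=
  HB.pack (A x) (GRing.isLinear.Build F U V *:%R (A x) (fun a y z => linAr a y z x)).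
Definition Al (x : U) : {linear U -> V} :=
  HB.pack (A^~ x) (GRing.isLinear.Build F U V *:%R (A^~ x) (fun a y z => linAl a y z x)).

Lemma altDr x y z : A x (y + z) = A x y + A x z. Proof. exact: (linearD (Ar x)). Qed.
Lemma alt0r x : A x 0 = 0. Proof. exact: (linear0 (Ar x)). Qed.
Lemma altDl x y z : A (y + z) x = A y x + A z x. Proof. exact: (linearD (Al x)). Qed.
Lemma alt0l x : A 0 x = 0. Proof. exact: (linear0 (Al x)). Qed.
Lemma altZr x k y : A x (k *: y) = k *: A x y.
Proof. by rewrite -[k *: y]addr0 linAr alt0r addr0. Qed.
Lemma altZl x k y : A (k *: y) x = k *: A y x.
Proof. by rewrite -[k *: y]addr0 linAl alt0l addr0. Qed.

Lemma alt_skew x y : A y x = - A x y.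
Proof.
have /eqP := altA (x + y); rewrite altDl !altDr !altA add0r addr0 addr_eq0.
by move=> /eqP->; rewrite opprK.
Qed.

Definition img (x : U) : {vspace V} := limg (linfun (Ar x)).

Lemma mem_img x y : A x y \in img x.
Proof. by rewrite -[A x y](lfunE (Ar x)) memv_img ?memvf. Qed.

Lemma imgP x v : v \in img x -> exists y, A x y = v.
Proof. by case/memv_imgP=> y _ ->; exists y; rewrite lfunE. Qed.

Lemma free_triangle_free x y z : free [:: A x y; A x z; A y z] -> free [:: x; y; z].
Proof.
move=> fr; have [nxy _ _] := free3_notin fr.
have nz v : v \in [:: A x y; A x z; A y z] -> v != 0 := free_not0 fr.
rewrite free_cons free2; apply/and3P; split.
- rewrite span2; apply: contra nxy => /memv_addP[_ /vlineP[k ->] [_ /vlineP[l ->] xE]].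
  have -> : A x y = (- l) *: A y z.
    by rewrite xE altDl !altZl altA scaler0 add0r (alt_skew y) scaleNr scalerN.
  by rewrite memvZ // memv_span ?inE ?eqxx ?orbT.
- by apply: contraTneq (nz _ (mem_head _ _)) => ->; rewrite alt0r eqxx.
- apply: contraTN (nz (A y z) _) => [/vlineP[k ->]|]; last by rewrite !inE eqxx !orbT.
  by rewrite altZr altA scaler0 eqxx.
Qed.

Lemma free_triangle_not_tree_height_one n m x y z :
  \dim {:U} = n -> (2 < m)%N -> (3 < n)%N -> free [:: A x y; A x z; A y z] ->
  exists b : n.-tuple U, basis_of fullv b /\ ~ tree_height_one n (greedyB A b m).
Proof.
move=> dimU m3 n3 fr; have bs := free_cat_basis_compl (free_triangle_free fr).
have sz : size ([:: x; y; z] ++ vbasis (<<[:: x; y; z]>>^C)%VS) == n.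
  by rewrite -dimU (size_basis (X := in_tuple _) bs).
exists (Tuple sz); split=> //.
have B3 := greedy_triangle (b := Tuple sz) n3 fr.
apply: triangle_not_tree_height_one; rewrite /greedyB -(subnK m3) iterD B3;
  by apply: mem_iter_greedy; rewrite !inE eqxx ?orbT.
Qed.

Definition dependent_triangles := forall x y z, ~~ free [:: A x y; A x z; A y z].

Hypothesis depA : dependent_triangles.

Lemma triangle_span x y z : free [:: A x y; A x z] ->
  A y z \in <<[:: A x y; A x z]>>%VS.
Proof.
move=> fr; have := depA x y z.
rewrite (perm_free (permEl (perm_catC [:: A x y; A x z] [:: A y z]))) /=.
by rewrite free_cons fr andbT negbK.
Qed.

Lemma triangle_img x y z : free [:: A x y; A x z] -> A y z \in img x.
Proof.
move/triangle_span; apply: subvP; apply/span_subvP => w.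
by rewrite !inE => /orP[]/eqP->; apply: mem_img.
Qed.

Lemma img_free_pair_nz x y z p q : free [:: A x y; A x z] -> A x p != 0 ->
  A p q \in img x.
Proof.
move=> fr xp0.
have [r xr] : exists r, A x r \notin <[A x p]>%VS.
  case: (boolP (A x y \in <[A x p]>%VS)) => [xy|]; last by exists y.
  by exists z; apply: free2_notin_line fr xy.
have [fpq|] := boolP (free [:: A x p; A x q]); first exact: triangle_img.
(* Both q + r and r pair freely with p, and A p q = A p (q + r) - A p r. *)
rewrite free2 xp0 negbK /= => xq.
have fpr : free [:: A x p; A x r] by rewrite free2 xp0.
have fpqr : free [:: A x p; A x (q + r)].
  rewrite free2 xp0 altDr /=; apply: contra xr => xqr.
  by rewrite -(addKr (A x q) (A x r)) memvD ?memvN.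
have -> : A p q = A p (q + r) - A p r by rewrite altDr addrK.
by rewrite memvB ?(triangle_img fpqr) ?(triangle_img fpr).
Qed.

Lemma img_free_pair x y z p q : free [:: A x y; A x z] -> A p q \in img x.
Proof.
move=> fr; have [xp0|xp0] := eqVneq (A x p) 0; last exact: img_free_pair_nz fr xp0.
have [xq0|xq0] := eqVneq (A x q) 0; last first.
  by rewrite alt_skew memvN; apply: img_free_pair_nz fr xq0.
have xy0 : A x y != 0 by move: fr; rewrite free2 => /andP[].
have -> : A p q = A (p + y) q - A y q by rewrite altDl addrK.
by rewrite memvB ?(img_free_pair_nz _ fr) ?altDr ?xp0 ?add0r.
Qed.

Lemma values_in_line : (forall x y z, A x y != 0 -> A x z \in <[A x y]>%VS) ->
  exists w, forall p q, A p q \in <[w]>%VS.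
Proof.
move=> line.
have [[x0 [y0 w0]]|] := classic (exists x y, A x y != 0); last first.
  move=> all0; exists 0 => p q; rewrite memv0; apply/negPn/negP => pq0.
  by apply: all0; exists p, q.
exists (A x0 y0) => p q; apply/negPn/negP => npq.
have pq0 : A p q != 0 by apply: contraNneq npq => ->; rewrite mem0v.
have lineN v w : v \in <[- w]>%VS -> v \in <[w]>%VS.
  by case/vlineP=> k ->; rewrite scalerN -scaleNr memvZ ?memv_line.
(* If A p y0 = 0 then A (x0 + p) y0 = A x0 y0, which puts A (x0 + p) q and A x0 q,
   hence A p q, on the line. *)
have py0 : A p y0 = 0.
  have /vlineP[k pyE] := line p q y0 pq0.
  have [k0|k0] := eqVneq k 0; first by rewrite pyE k0 scale0r.
  case/negP: npq; rewrite -[A p q](scalerK k0) -pyE memvZ // alt_skew.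
  rewrite memvN; apply: lineN; rewrite -alt_skew line //.
  by rewrite alt_skew oppr_eq0.
have x0py0 : A (x0 + p) y0 = A x0 y0 by rewrite altDl py0 addr0.
case/negP: npq; have -> : A p q = A (x0 + p) q - A x0 q by rewrite altDl addrC addKr.
by rewrite memvB ?line // -x0py0 line ?x0py0.
Qed.

Lemma exists_img_full : (1 < \dim {:V})%N ->
  (forall W : {vspace V}, (forall x y, A x y \in W) -> W = fullv) ->
  exists x, img x = fullv.
Proof.
move=> dimV spanA.
have [[x [y [z fr]]]|nofree] := classic (exists x y z, free [:: A x y; A x z]).
  by exists x; apply: spanA => p q; apply: img_free_pair fr.
have [w Aw] : exists w, forall p q, A p q \in <[w]>%VS.
  apply: values_in_line => x y z xy0; apply/negPn/negP => xz.
  by apply: nofree; exists x, y, z; rewrite free2 xy0.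
by move: dimV; rewrite -(spanA _ Aw) dim_vline; case: (w != 0).
Qed.

Lemma greedy_star n (b : n.-tuple U) (e : seq V) : free e -> (size e < n)%N ->
  (forall j, (0 < j <= size e)%N -> A b`_0 b`_j = e`_j.-1) ->
  forall k, (k <= size e)%N ->
  iter k (greedy_step A b) [::] = [seq (0, j)%N | j <- iota 1 k].
Proof.
move=> fe en be; elim=> [//|k IH] ke; rewrite iterS IH; last exact: ltnW.
have [rest Yn] := Ypairs_split (leq_ltn_trans ke en).
have in_take i : (i < k)%N -> e`_i \in take k e.
  by move=> ik; rewrite -(nth_take 0 ik) mem_nth // size_takel // ltnW.
have starE : map (Aval A b) [seq (0, j)%N | j <- iota 1 k] = take k e.
  rewrite -map_comp -(map_nth_iota0 0 (ltnW ke)) (iotaDl 1 0) -map_comp.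
  apply/eq_in_map => i; rewrite mem_iota /= /Aval /= => ik.
  by rewrite be // add1n ltnS (leq_trans ik) // ltnW.
rewrite (greedy_step_first Yn); rewrite ?starE.
- by rewrite -cats1 -(addn1 k) iotaD map_cat add1n addn1.
- apply/allP => -[[|i] j] /mem_Ypairs /= /andP[ij jk]; rewrite /Aval /=.
    by rewrite be ?memv_span ?in_take //; lia.
  have [ui uj] : A b`_0 b`_i.+1 = e`_i /\ A b`_0 b`_j = e`_j.-1.
    by rewrite !be //; lia.
  have := triangle_span (x := b`_0) (y := b`_i.+1) (z := b`_j); rewrite ui uj.
  have /andP[ij' je'] : (i < j.-1 < size e)%N by lia.
  move/(_ (free_nth2 fe ij' je')); apply: subvP; apply: sub_span.
  by move=> v; rewrite !inE => /orP[]/eqP->; apply: in_take; lia.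
- by rewrite /Aval /= be ?free_nth_notin_take.
Qed.

Section SurjectiveSlice.
Variable u : U.
Hypotheses (img_u : img u = fullv) (dimV : (2 < \dim {:V})%N).

Lemma img_full_preim v : exists y, A u y = v.
Proof. by apply: imgP; rewrite img_u memvf. Qed.

Lemma mem_line_ker y z : A u y != 0 -> A u z = 0 -> A y z \in <[A u y]>%VS.
Proof.
move=> uy0 uz0.
have mem_span2 v : free [:: A u y; v] -> A y z \in <<[:: A u y; v]>>%VS.
  have [r <-] := img_full_preim v; move=> fr.
  have -> : A y z = A y (z + r) - A y r by rewrite altDr addrK.
  apply: memvB; last exact: triangle_span.
  by have := triangle_span (x := u) (y := y) (z := z + r); rewrite altDr uz0 add0r; apply.
have [b [c fr]] := free3_ext dimV uy0; have [fb fc _] := free3_pairs fr.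
exact: span2_cap_line fr (mem_span2 _ fb) (mem_span2 _ fc).
Qed.

Lemma ker_mem_span2 y z p q : A u y = 0 -> A u z = 0 -> free [:: A u p; A u q] ->
  A y z \in <<[:: A u p; A u q]>>%VS.
Proof.
move=> uy0 uz0 fr.
have /andP[up0 nq] : (A u p != 0) && (A u q \notin <[A u p]>%VS) by rewrite -free2.
have uq0 : A u q != 0 by apply: contraNneq nq => ->; rewrite mem0v.
have Ayq : A y q \in <<[:: A u p; A u q]>>%VS.
  by rewrite span2 alt_skew memvN (subvP (addvSr _ _)) ?mem_line_ker.
have Apz : A p z \in <<[:: A u p; A u q]>>%VS.
  by rewrite span2 (subvP (addvSl _ _)) ?mem_line_ker.
have Ayzpq : A (y + p) (z + q) \in <<[:: A u p; A u q]>>%VS.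
  have := triangle_span (x := u) (y := y + p) (z := z + q).
  by rewrite !altDr uy0 uz0 !add0r; apply.
have -> : A y z = A (y + p) (z + q) - (A y q + (A p z + A p q)).
  by rewrite altDl !altDr -[X in X - _]addrA addrK.
by rewrite memvB ?memvD ?triangle_span.
Qed.

Lemma ker_alt0 y z : A u y = 0 -> A u z = 0 -> A y z = 0.
Proof.
move=> uy0 uz0.
have [b [c fr]] := free3_ext dimV (vpick_full_neq0 (ltnW (ltnW dimV))).
have [fb fc fbc] := free3_pairs fr.
have [p ua] := img_full_preim (vpick {:V}).
have [q ub] := img_full_preim b; have [r uc] := img_full_preim c.
rewrite -ua -ub -uc in fr fb fc fbc.
by apply: free3_span_cap0 fr _ _ _; apply: ker_mem_span2.
Qed.

End SurjectiveSlice.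

Lemma dependent_triangles_star_basis n m :
  \dim {:U} = n -> \dim {:V} = m -> (2 < m)%N -> (m + 1 < n)%N ->
  (forall W : {vspace V}, (forall x y, A x y \in W) -> W = fullv) ->
  exists b : n.-tuple U, basis_of fullv b /\
    [/\ greedyB A b m =i [seq (0, k)%N | k <- iota 1 m],
        forall i, (m + 1 <= i < n)%N -> A b`_0 b`_i = 0,
        forall i j, (m < i)%N -> (i < j)%N -> (j < n)%N -> A b`_i b`_j = 0
      & forall i j, (1 <= i <= m)%N -> (m < j < n)%N ->
          A b`_i b`_j \in <[A b`_0 b`_i]>%VS].
Proof.
move=> dimU dimV m3 mn spanA.
have dimV3 : (2 < \dim {:V})%N by rewrite dimV.
have [u img_u] := exists_img_full (ltnW dimV3) spanA.
pose f := linfun (Ar u); have fE t : f t = A u t := lfunE (Ar u) t.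
have [t ut] := img_full_preim img_u (vpick {:V}).
have u0 : u != 0.
  by apply: contraNneq (vpick_full_neq0 (ltnW (ltnW dimV3))) => u0; rewrite -ut u0 alt0l.
have uK : u \in lker f by rewrite memv_ker fE altA.
pose e : seq V := vbasis {:V}; have be : basis_of fullv e := vbasisP {:V}.
have se : size e = m by rewrite size_tuple.
have [b [bs b0 bstar bker]] := basis_adapted_to_surjection dimU img_u uK u0 be.
rewrite se in bstar bker; rewrite -b0 in img_u.
have Astar j : (0 < j <= m)%N -> A b`_0 b`_j = e`_j.-1.
  by move=> jm; rewrite b0 -fE bstar.
have Aker j : (m < j)%N -> A b`_0 b`_j = 0 by move=> jm; rewrite b0 -fE bker.
exists b; split=> //; split.
- move=> p; rewrite /greedyB (greedy_star (basis_free be)) //; rewrite se ?leqnn //.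
  by lia.
- by move=> i /andP[mi _]; rewrite Aker // -addn1.
- by move=> i j mi ij _; apply: (ker_alt0 img_u) => //; rewrite Aker // (ltn_trans mi).
- move=> i j /andP[i1 im] /andP[mj _]; apply: (mem_line_ker img_u) => //; last exact: Aker.
  rewrite Astar ?i1 // (free_not0 (basis_free be)) // mem_nth // se.
  by case: i i1 im.
Qed.

End Alternating.

Theorem proposition2p3 (F : fieldType) (U V : vectType F) (n m : nat)
  (A : U -> U -> V)
  (hdimU : \dim (fullv : {vspace U}) = n)
  (hdimV : \dim (fullv : {vspace V}) = m)
  (hlinl : forall (a : F) (x y z : U), A (a *: x + y) z = a *: A x z + A y z)
  (hlinr : forall (a : F) (x y z : U), A z (a *: x + y) = a *: A z x + A z y)
  (halt : forall x : U, A x x = 0)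
  (hspan : forall W : {vspace V}, (forall x y : U, A x y \in W) -> W = fullv)
  (hm : (2 < m)%N) (hn : (m + 1 < n)%N) :
  exists b : n.-tuple U, basis_of fullv b /\
    let B := greedyB A b m in
    ~ tree_height_one n B \/
    [/\ B =i [seq (0%N, k) | k <- iota 1 m],
        (forall i, (m + 1 <= i < n)%N -> A b`_0 b`_i = 0),
        (forall i j, (m < i)%N -> (i < j)%N -> (j < n)%N -> A b`_i b`_j = 0)
      & (forall i j, (1 <= i <= m)%N -> (m < j < n)%N ->
           A b`_i b`_j \in <[A b`_0 b`_i]>%VS)].
Proof.
have [[x [y [z fr]]]|nofree] := classic (exists x y z, free [:: A x y; A x z; A y z]).
  have [|b [bs notree]] :=
    free_triangle_not_tree_height_one hlinl hlinr halt hdimU hm _ fr; first lia.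
  by exists b; split=> //; left.
have depA : dependent_triangles A.
  by move=> x y z; apply/negP => fr; apply: nofree; exists x, y, z.
have [b [bs star]] :=
  dependent_triangles_star_basis hlinl hlinr halt depA hdimU hdimV hm hn hspan.
by exists b; split=> //; right.
Qed.
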